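(* Let $C>0$ and let $\varphi_{0,i}(u,v,z)=r^{p_i}z^{q_i}$, $i=1,2$, where $r=\sqrt{u^2+v^2}$. Then for all $r_*>0$ sufficiently large, on $\mathcal{R}_0=\{(u,v,z): r\ge r_*,\ Cu\ge|v|,\ 0<z\le1\}$ one has $\mathcal{L}\varphi_{0,i}(u,v,z)\le-\gamma p_ir^{p_i}z^{q_i}-\frac{\beta_i}{2\sqrt{1+C^2}}r^{p_i+1}z^{q_i-2/3}$, $i=1,2$, and for all $(u,v,1)\in\mathcal{R}_0$, $\mathcal{Q}(\varphi_{0,1}+\varphi_{0,2})(u,v,1)\le-\left(\tfrac{q_2}{2}-\tfrac{p_2}{6}\right)r^{p_2}.$
   Context: Fix $\gamma>0$, $h\in(0,1)$, $\kappa_1,\kappa_2>0$ and $\alpha_h=\frac13+\frac23h$. Constants $p_i,q_i,\alpha_i,\beta_i$ ($i=1,2$) satisfy $p_1>0$, $p_2>0$, $q_1=0$, $q_2>0$, $0<\alpha_hp_i-(1-h)q_i=\beta_i<\alpha_i<1$, $q_2>\frac13p_2+\frac12\alpha_2$, $p_2>p_1$, $p_2+\frac32\alpha_2>p_1+\frac32\alpha_1$. On $\mathbb{R}\times\mathbb{R}\times(0,1]$ define the differential operators $\mathcal{L}=-\gamma u\partial_u-\gamma v\partial_v-\frac{\alpha_hu^2-v^2}{z^{2/3}}\partial_u-(\alpha_h+1)\frac{uv}{z^{2/3}}\partial_v+(1-h)uz^{1/3}\partial_z+\frac{\kappa_1}{z^{2/3}}\partial_u^2+\frac{\kappa_2}{z^{2/3}}\partial_v^2$,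 $\mathcal{Q}=\frac{u}{3z}\partial_u+\frac{v}{3z}\partial_v-\partial_z$ (these are the interior generator and boundary operator of the reflected system after the change of variables $u=xz^{-1/3}$, $v=yz^{-1/3}$). *)

From Stdlib Require Import Reals Lra.
From Coquelicot Require Import Coquelicot.
Open Scope R_scope.

Definition fun3 := R -> R -> R -> R.

Definition d_u (f : fun3) : fun3 := fun u v z => Derive (fun t => f t v z) u.
Definition d_v (f : fun3) : fun3 := fun u v z => Derive (fun t => f u t z) v.
Definition d_z (f : fun3) : fun3 := fun u v z => Derive (fun t => f u v t) z.

Definition alpha_h (h : R) : R := 1/3 + 2/3 * h.

(* Interior generator L (after the change of variables u = x z^{-1/3}, v = y z^{-1/3}). *)
Definition opL (gamma h kappa1 kappa2 : R) (f : fun3) : fun3 := fun u v z =>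
  - gamma * u * d_u f u v z
  - gamma * v * d_v f u v z
  - (alpha_h h * u ^ 2 - v ^ 2) / Rpower z (2/3) * d_u f u v z
  - (alpha_h h + 1) * (u * v) / Rpower z (2/3) * d_v f u v z
  + (1 - h) * u * Rpower z (1/3) * d_z f u v z
  + kappa1 / Rpower z (2/3) * d_u (d_u f) u v z
  + kappa2 / Rpower z (2/3) * d_v (d_v f) u v z.

Definition opQ (f : fun3) : fun3 := fun u v z =>
  u / (3 * z) * d_u f u v z + v / (3 * z) * d_v f u v z - d_z f u v z.

Definition rad (u v : R) : R := sqrt (u ^ 2 + v ^ 2).

(* phi_{0,i}(u,v,z) = r^{p} z^{q} (real powers; r > 0 and z > 0 on the region). *)
Definition phi0 (p q : R) : fun3 := fun u v z => Rpower (rad u v) p * Rpower z q.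

Definition fsum (f g : fun3) : fun3 := fun u v z => f u v z + g u v z.

From Stdlib Require Import Reals Lra Psatz.
From Coquelicot Require Import Coquelicot.
Open Scope R_scope.

(* On the cone [|v| <= C u] one has [u >= r / sqrt (1 + C^2)].  Since [phi = r^p z^q]
   is radial in [(u, v)], [d_u phi = p u phi / r^2] and [d_v phi = p v phi / r^2]; the
   transport terms of [L] then collapse to [- gamma p phi - beta u r^p z^(q - 2/3)], while the
   diffusion terms are [O (r^(p-2) z^(q - 2/3))] and are absorbed by half of the drift once
   [r] is large.  At [z = 1], [Q phi_i = (p_i/3 - q_i) r^(p_i)]; as [q_1 = 0] and [p_1 < p_2],
   the positive term [(p_1/3) r^(p_1)] is absorbed by half of [(q_2 - p_2/3) r^(p_2)] once
   [r^(p_2 - p_1) >= p_1 / (3 (q_2/2 - p_2/6))]. *)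

Lemma ln_0 : ln 0 = 0.
Proof. unfold ln; destruct (Rlt_dec 0 0) as [H | _]; [exfalso; lra | reflexivity]. Qed.

(* Also true at the origin, where the junk value [ln 0 = 0] makes both sides [1]. *)
Lemma Rpower_rad p u v : Rpower (rad u v) p = exp (p / 2 * ln (u ^ 2 + v ^ 2)).
Proof.
  unfold rad; destruct (Rle_lt_or_eq_dec 0 (u ^ 2 + v ^ 2)) as [HS | HS]; [nra | |].
  - rewrite <- Rpower_sqrt, Rpower_mult by exact HS.
    unfold Rpower; f_equal; field.
  - rewrite <- HS, sqrt_0; unfold Rpower; rewrite ln_0, !Rmult_0_r; reflexivity.
Qed.

Lemma sum_sq_pos_l u v : u <> 0 -> 0 < u ^ 2 + v ^ 2.
Proof. intros Hu; assert (0 < u * u) by (apply Rsqr_pos_lt, Hu); nra. Qed.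

Lemma phi0_exp p q u v z :
  phi0 p q u v z = exp (p / 2 * ln (u ^ 2 + v ^ 2)) * Rpower z q.
Proof. unfold phi0; rewrite Rpower_rad; reflexivity. Qed.

(* [auto_derive] leaves [x * x] for [x ^ 2] under [ln]; fold it back so that [field]
   sees the same atom as in the statement. *)
Ltac normalize_sq :=
  rewrite ?Rmult_1_r;
  repeat match goal with |- context [ln (?a * ?a + ?b * ?b)] =>
    replace (a * a + b * b) with (a ^ 2 + b ^ 2) by ring end.

Lemma is_derive_phi0_u p q u v z : 0 < u ^ 2 + v ^ 2 ->
  is_derive (fun t => phi0 p q t v z) u (p * u / (u ^ 2 + v ^ 2) * phi0 p q u v z).
Proof.
  intros HS; rewrite phi0_exp.
  apply (is_derive_ext (fun t => exp (p / 2 * ln (t ^ 2 + v ^ 2)) * Rpower z q)).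
  { intros t; symmetry; apply phi0_exp. }
  auto_derive; [lra | normalize_sq; field; lra].
Qed.

Lemma is_derive_phi0_v p q u v z : 0 < u ^ 2 + v ^ 2 ->
  is_derive (fun t => phi0 p q u t z) v (p * v / (u ^ 2 + v ^ 2) * phi0 p q u v z).
Proof.
  intros HS; rewrite phi0_exp.
  apply (is_derive_ext (fun t => exp (p / 2 * ln (u ^ 2 + t ^ 2)) * Rpower z q)).
  { intros t; symmetry; apply phi0_exp. }
  auto_derive; [lra | normalize_sq; field; lra].
Qed.

Lemma is_derive_phi0_z p q u v z : 0 < z ->
  is_derive (fun t => phi0 p q u v t) z (q / z * phi0 p q u v z).
Proof.
  intros Hz; unfold phi0, Rpower.
  auto_derive; [lra | field; lra].
Qed.

Lemma d_u_phi0 p q u v z : 0 < u ^ 2 + v ^ 2 ->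
  d_u (phi0 p q) u v z = p * u / (u ^ 2 + v ^ 2) * phi0 p q u v z.
Proof. intros HS; apply is_derive_unique, is_derive_phi0_u, HS. Qed.

Lemma d_v_phi0 p q u v z : 0 < u ^ 2 + v ^ 2 ->
  d_v (phi0 p q) u v z = p * v / (u ^ 2 + v ^ 2) * phi0 p q u v z.
Proof. intros HS; apply is_derive_unique, is_derive_phi0_v, HS. Qed.

Lemma d_z_phi0 p q u v z : 0 < z -> d_z (phi0 p q) u v z = q / z * phi0 p q u v z.
Proof. intros Hz; apply is_derive_unique, is_derive_phi0_z, Hz. Qed.

Lemma d_uu_phi0 p q u v z : u <> 0 ->
  d_u (d_u (phi0 p q)) u v z
  = p / (u ^ 2 + v ^ 2) * (1 + (p - 2) * u ^ 2 / (u ^ 2 + v ^ 2)) * phi0 p q u v z.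
Proof.
  intros Hu; apply is_derive_unique.
  apply (is_derive_ext_loc
    (fun t => p * t / (t ^ 2 + v ^ 2) * (exp (p / 2 * ln (t ^ 2 + v ^ 2)) * Rpower z q))).
  { assert (Hr : 0 < Rabs u) by (apply Rabs_pos_lt, Hu).
    exists (mkposreal _ Hr); intros t Ht.
    change (Rabs (t - u) < Rabs u) in Ht.
    assert (Ht0 : t <> 0) by (intros ->; rewrite Rminus_0_l, Rabs_Ropp in Ht; lra).
    rewrite d_u_phi0, phi0_exp by (apply sum_sq_pos_l, Ht0); reflexivity. }
  pose proof (sum_sq_pos_l u v Hu).
  rewrite phi0_exp; auto_derive; [lra | normalize_sq; field; lra].
Qed.

Lemma d_vv_phi0 p q u v z : u <> 0 ->
  d_v (d_v (phi0 p q)) u v z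
  = p / (u ^ 2 + v ^ 2) * (1 + (p - 2) * v ^ 2 / (u ^ 2 + v ^ 2)) * phi0 p q u v z.
Proof.
  intros Hu; pose proof (sum_sq_pos_l u) as Hpos; apply is_derive_unique.
  apply (is_derive_ext
    (fun t => p * t / (u ^ 2 + t ^ 2) * (exp (p / 2 * ln (u ^ 2 + t ^ 2)) * Rpower z q))).
  { intros t; rewrite d_v_phi0, phi0_exp by (apply Hpos, Hu); reflexivity. }
  specialize (Hpos v Hu); rewrite phi0_exp; auto_derive; [lra | normalize_sq; field; lra].
Qed.

Lemma opL_phi0 gamma h k1 k2 p q u v z : u <> 0 -> 0 < z ->
  opL gamma h k1 k2 (phi0 p q) u v z
  = - gamma * p * phi0 p q u v z
    + phi0 p q u v z / Rpower z (2/3)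
      * (- (alpha_h h * p - (1 - h) * q) * u
         + p / (u ^ 2 + v ^ 2) * (k1 * (1 + (p - 2) * u ^ 2 / (u ^ 2 + v ^ 2))
                                  + k2 * (1 + (p - 2) * v ^ 2 / (u ^ 2 + v ^ 2)))).
Proof.
  intros Hu Hz; pose proof (sum_sq_pos_l u v Hu) as HS.
  assert (Hw : 0 < Rpower z (2/3)) by apply exp_pos.
  assert (Hz13 : Rpower z (1/3) = z / Rpower z (2/3)).
  { rewrite <- (Rpower_1 z) at 2 by exact Hz.
    replace 1 with (1/3 + 2/3) at 2 by field; rewrite Rpower_plus; field; lra. }
  unfold opL; rewrite d_u_phi0, d_v_phi0, d_z_phi0, d_uu_phi0, d_vv_phi0, Hz13 by assumption.
  unfold alpha_h; field; lra.
Qed.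

Definition diffusion_const (p k1 k2 : R) : R := p * (k1 + k2) * (1 + Rabs (p - 2)).

Lemma diffusion_le p k1 k2 u v : 0 <= p -> 0 <= k1 -> 0 <= k2 -> 0 < u ^ 2 + v ^ 2 ->
  p / (u ^ 2 + v ^ 2) * (k1 * (1 + (p - 2) * u ^ 2 / (u ^ 2 + v ^ 2))
                         + k2 * (1 + (p - 2) * v ^ 2 / (u ^ 2 + v ^ 2)))
  <= diffusion_const p k1 k2 / (u ^ 2 + v ^ 2).
Proof.
  intros Hp Hk1 Hk2 HS; set (S := u ^ 2 + v ^ 2) in *.
  assert (Hratio : forall y, 0 <= y <= S -> 0 <= y / S <= 1).
  { intros y Hy; split; [apply Rdiv_le_0_compat; lra |].
    apply (Rmult_le_reg_r S); [lra |].
    unfold Rdiv; rewrite Rmult_assoc, Rinv_l by lra; lra. }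
  assert (Hbound : forall y, 0 <= y <= 1 -> 1 + (p - 2) * y <= 1 + Rabs (p - 2)).
  { intros y Hy; pose proof (Rle_abs (p - 2)); pose proof (Rabs_pos (p - 2)); nra. }
  pose proof (Hbound _ (Hratio (u ^ 2) ltac:(unfold S; nra))).
  pose proof (Hbound _ (Hratio (v ^ 2) ltac:(unfold S; nra))).
  replace (diffusion_const p k1 k2 / S) with (p / S * ((k1 + k2) * (1 + Rabs (p - 2))))
    by (unfold diffusion_const, Rdiv; ring).
  apply Rmult_le_compat_l; [apply Rdiv_le_0_compat; lra |].
  unfold Rdiv in *; rewrite !Rmult_assoc in *; nra.
Qed.

Lemma cone_u_pos C u v : 0 < C -> 0 < rad u v -> Rabs v <= C * u -> 0 < u.
Proof.
  intros HC Hr Hv; destruct (Rlt_or_le 0 u) as [Hu | Hu]; [exact Hu | exfalso].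
  pose proof (Rabs_pos v).
  assert (0 <= u) by nra; assert (u = 0) by lra; assert (v = 0) by (apply Rabs_eq_0; nra); subst.
  unfold rad in Hr; replace (0 ^ 2 + 0 ^ 2) with 0 in Hr by ring; rewrite sqrt_0 in Hr; lra.
Qed.

Lemma rad_le_cone C u v : 0 <= u -> Rabs v <= C * u -> rad u v <= sqrt (1 + C ^ 2) * u.
Proof.
  intros Hu Hv; unfold rad.
  rewrite <- (sqrt_pow2 u Hu) at 2; rewrite <- sqrt_mult by nra.
  apply sqrt_le_1_alt; rewrite <- (pow2_abs v); pose proof (Rabs_pos v); nra.
Qed.

Lemma drift_dominates b c K r u : 0 < b -> 0 < c -> 0 <= K ->
  1 <= r -> 2 * c * K / b <= r -> r <= c * u ->
  - b * u + K / r ^ 2 <= - (b * r / (2 * c)).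
Proof.
  intros Hb Hc HK Hr1 HrK Hru.
  assert (HK' : K <= b * r / (2 * c)).
  { apply (Rmult_le_compat_r (b / (2 * c))) in HrK; [| apply Rdiv_le_0_compat; lra].
    replace (2 * c * K / b * (b / (2 * c))) with K in HrK by (field; lra).
    replace (b * r / (2 * c)) with (r * (b / (2 * c))) by (field; lra); lra. }
  assert (HKr : K / r ^ 2 <= K).
  { apply (Rmult_le_reg_r (r ^ 2)); [nra |].
    unfold Rdiv; rewrite Rmult_assoc, Rinv_l, Rmult_1_r by nra.
    assert (1 <= r ^ 2) by nra; nra. }
  assert (Hbu : b * r / c <= b * u).
  { apply (Rmult_le_reg_r c); [lra |].
    replace (b * r / c * c) with (b * r) by (field; lra); nra. }
  replace (b * r / c) with (2 * (b * r / (2 * c))) in Hbu by (field; lra); lra.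
Qed.

Lemma opL_phi0_le gamma h k1 k2 p q b C u v z :
  0 <= p -> 0 <= k1 -> 0 <= k2 -> 0 < C ->
  b = alpha_h h * p - (1 - h) * q -> 0 < b ->
  1 <= rad u v -> 2 * sqrt (1 + C ^ 2) * diffusion_const p k1 k2 / b <= rad u v ->
  Rabs v <= C * u -> 0 < z ->
  opL gamma h k1 k2 (phi0 p q) u v z
  <= - gamma * p * Rpower (rad u v) p * Rpower z q
     - b / (2 * sqrt (1 + C ^ 2)) * Rpower (rad u v) (p + 1) * Rpower z (q - 2/3).
Proof.
  intros Hp Hk1 Hk2 HC Hb Hbpos Hr1 HrK Hv Hz.
  assert (Hu : 0 < u) by (apply (cone_u_pos C u v); lra).
  assert (HS : 0 < u ^ 2 + v ^ 2) by nra.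
  assert (Hr2 : u ^ 2 + v ^ 2 = rad u v ^ 2) by (unfold rad; rewrite pow2_sqrt; lra).
  assert (Hc : 0 < sqrt (1 + C ^ 2)) by (apply sqrt_lt_R0; nra).
  assert (HK : 0 <= diffusion_const p k1 k2).
  { unfold diffusion_const; pose proof (Rabs_pos (p - 2)).
    apply Rmult_le_pos; [apply Rmult_le_pos |]; lra. }
  assert (Hphi : 0 <= phi0 p q u v z / Rpower z (2/3)).
  { apply Rdiv_le_0_compat; [| apply exp_pos].
    unfold phi0, Rpower; left; apply Rmult_lt_0_compat; apply exp_pos. }
  assert (Hzq : Rpower z q = Rpower z (q - 2/3) * Rpower z (2/3)).
  { rewrite <- Rpower_plus; f_equal; ring. }
  assert (Hw : 0 < Rpower z (2/3)) by apply exp_pos.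
  rewrite opL_phi0 by lra.
  apply Rle_trans with
    (- gamma * p * phi0 p q u v z
     + phi0 p q u v z / Rpower z (2/3) * - (b * rad u v / (2 * sqrt (1 + C ^ 2)))).
  - apply Rplus_le_compat_l, Rmult_le_compat_l; [exact Hphi |].
    rewrite <- Hb.
    eapply Rle_trans; [apply Rplus_le_compat_l, diffusion_le; lra |].
    rewrite Hr2; apply drift_dominates; try lra.
    apply rad_le_cone; lra.
  - unfold phi0; rewrite Rpower_plus, Rpower_1, Hzq by lra.
    right; field; lra.
Qed.

Lemma opQ_fsum (f g : fun3) (u v z : R) :
  ex_derive (fun t => f t v z) u -> ex_derive (fun t => g t v z) u ->
  ex_derive (fun t => f u t z) v -> ex_derive (fun t => g u t z) v ->
  ex_derive (fun t => f u v t) z -> ex_derive (fun t => g u v t) z ->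
  opQ (fsum f g) u v z = opQ f u v z + opQ g u v z.
Proof.
  intros Hfu Hgu Hfv Hgv Hfz Hgz.
  unfold opQ, d_u, d_v, d_z, fsum; rewrite !Derive_plus by assumption.
  (* [Derive_plus] eta-reduces the [z]-slices; restore them so that [ring] sees equal atoms. *)
  change (Derive (f u v) z) with (Derive (fun t => f u v t) z).
  change (Derive (g u v) z) with (Derive (fun t => g u v t) z).
  ring.
Qed.

Lemma opQ_phi0 p q u v : 0 < u ^ 2 + v ^ 2 ->
  opQ (phi0 p q) u v 1 = (p / 3 - q) * Rpower (rad u v) p.
Proof.
  intros HS; unfold opQ; rewrite d_u_phi0, d_v_phi0, d_z_phi0 by lra.
  assert (H1 : Rpower 1 q = 1) by (unfold Rpower; rewrite ln_1, Rmult_0_r; apply exp_0).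
  unfold phi0; rewrite H1; field; lra.
Qed.

Lemma Rpower_gap_le a p1 p2 r : 0 < a -> p1 < p2 -> Rpower a (/ (p2 - p1)) <= r ->
  a * Rpower r p1 <= Rpower r p2.
Proof.
  intros Ha Hp Hr.
  assert (Hgap : a <= Rpower r (p2 - p1)).
  { rewrite <- (Rpower_1 a Ha) at 1.
    replace 1 with (/ (p2 - p1) * (p2 - p1)) by (field; lra).
    rewrite <- Rpower_mult; apply Rle_Rpower_l; [lra |].
    split; [apply exp_pos | exact Hr]. }
  replace p2 with (p1 + (p2 - p1)) by ring; rewrite Rpower_plus.
  rewrite Rmult_comm; apply Rmult_le_compat_l; [left; apply exp_pos | exact Hgap].
Qed.

Lemma opQ_phi0_sum_le p1 p2 q2 u v :
  0 < p1 -> p1 < p2 -> 0 < q2 / 2 - p2 / 6 -> 0 < u ^ 2 + v ^ 2 ->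
  Rpower (p1 / (3 * (q2 / 2 - p2 / 6))) (/ (p2 - p1)) <= rad u v ->
  opQ (fsum (phi0 p1 0) (phi0 p2 q2)) u v 1 <= - (q2 / 2 - p2 / 6) * Rpower (rad u v) p2.
Proof.
  intros Hp1 Hp12 HD HS Hr.
  assert (Hex : forall p q, ex_derive (fun t => phi0 p q t v 1) u
                            /\ ex_derive (fun t => phi0 p q u t 1) v
                            /\ ex_derive (fun t => phi0 p q u v t) 1).
  { intros p q; split; [| split]; eexists;
      [apply is_derive_phi0_u, HS | apply is_derive_phi0_v, HS | apply is_derive_phi0_z, Rlt_0_1]. }
  destruct (Hex p1 0) as (? & ? & ?), (Hex p2 q2) as (? & ? & ?).
  rewrite opQ_fsum, !opQ_phi0 by assumption.
  apply Rpower_gap_le in Hr; [| apply Rdiv_lt_0_compat; lra | lra].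
  apply (Rmult_le_compat_l (q2 / 2 - p2 / 6)) in Hr; [| lra].
  replace ((q2 / 2 - p2 / 6) * (p1 / (3 * (q2 / 2 - p2 / 6)) * Rpower (rad u v) p1))
    with (p1 / 3 * Rpower (rad u v) p1) in Hr by (field; lra).
  lra.
Qed.

Theorem lemma6p1
  (gamma h kappa1 kappa2 p1 p2 q1 q2 a1 a2 b1 b2 : R)
  (Hgamma : 0 < gamma) (Hh0 : 0 < h) (Hh1 : h < 1)
  (Hk1 : 0 < kappa1) (Hk2 : 0 < kappa2)
  (Hp1 : 0 < p1) (Hp2 : 0 < p2) (Hq1 : q1 = 0) (Hq2 : 0 < q2)
  (Hb1 : b1 = alpha_h h * p1 - (1 - h) * q1)
  (Hb2 : b2 = alpha_h h * p2 - (1 - h) * q2)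
  (Hb1pos : 0 < b1) (Hb1a : b1 < a1) (Ha1 : a1 < 1)
  (Hb2pos : 0 < b2) (Hb2a : b2 < a2) (Ha2 : a2 < 1)
  (Hq2big : q2 > 1/3 * p2 + 1/2 * a2)
  (Hp21 : p2 > p1)
  (Hpa : p2 + 3/2 * a2 > p1 + 3/2 * a1)
  (C : R) (HC : 0 < C) :
  exists R0 : R, forall rstar : R, R0 <= rstar ->
    (forall u v z : R,
       rstar <= rad u v -> Rabs v <= C * u -> 0 < z <= 1 ->
       opL gamma h kappa1 kappa2 (phi0 p1 q1) u v z
         <= - gamma * p1 * Rpower (rad u v) p1 * Rpower z q1
            - b1 / (2 * sqrt (1 + C ^ 2))
              * Rpower (rad u v) (p1 + 1) * Rpower z (q1 - 2/3)
       /\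
       opL gamma h kappa1 kappa2 (phi0 p2 q2) u v z
         <= - gamma * p2 * Rpower (rad u v) p2 * Rpower z q2
            - b2 / (2 * sqrt (1 + C ^ 2))
              * Rpower (rad u v) (p2 + 1) * Rpower z (q2 - 2/3))
    /\
    (forall u v : R,
       rstar <= rad u v -> Rabs v <= C * u ->
       opQ (fsum (phi0 p1 q1) (phi0 p2 q2)) u v 1
         <= - (q2 / 2 - p2 / 6) * Rpower (rad u v) p2).
Proof.
  set (c := sqrt (1 + C ^ 2)).
  set (rL1 := 2 * c * diffusion_const p1 kappa1 kappa2 / b1).
  set (rL2 := 2 * c * diffusion_const p2 kappa1 kappa2 / b2).
  set (rQ := Rpower (p1 / (3 * (q2 / 2 - p2 / 6))) (/ (p2 - p1))).
  exists (Rmax (Rmax 1 rL1) (Rmax rL2 rQ)); intros rstar Hrstar.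
  pose proof (Rmax_l 1 rL1); pose proof (Rmax_r 1 rL1).
  pose proof (Rmax_l rL2 rQ); pose proof (Rmax_r rL2 rQ).
  pose proof (Rmax_l (Rmax 1 rL1) (Rmax rL2 rQ)); pose proof (Rmax_r (Rmax 1 rL1) (Rmax rL2 rQ)).
  split.
  - intros u v z Hr Hv Hz.
    split; apply opL_phi0_le with (C := C); unfold rL1, rL2, c in *; lra.
  - intros u v Hr Hv; subst q1.
    assert (Hu : 0 < u) by (apply (cone_u_pos C u v); lra).
    apply opQ_phi0_sum_le; [lra | lra | lra | apply sum_sq_pos_l; lra | unfold rQ in *; lra].
Qed.
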